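(* Let $f^\pm\in C(B_1^\pm)$, $g\in C(T)$, let $0<\rho<1$, and let $u$ be a bounded viscosity subsolution of the flat problem (F). For $\varepsilon>0$ set $r_\varepsilon=(2\varepsilon\|u\|_{L^\infty(B_1)})^{1/2}$. Then for all sufficiently small $\varepsilon>0$ and every $0<r\le\rho-r_\varepsilon$, the upper $\varepsilon$-envelope $u^\varepsilon$ is a viscosity subsolution of $$\omega(x)F^\pm(D^2u^\varepsilon)=f^\pm_\varepsilon\ \text{ in }B_r^\pm,\qquad (u^\varepsilon)^+_{x_d}-(u^\varepsilon)^-_{x_d}=g_\varepsilon\ \text{ on }T_r=B_r\cap\{x_d=0\},$$ where $f^\pm_\varepsilon=f^\pm-\gamma_{f^\pm}(r_\varepsilon)$ and $g_\varepsilon=g-\gamma_g(r_\varepsilon)$.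
   Context: Flat setting: $x=(x',x_d)$, $B_r^\pm=B_r\cap\{\pm x_d>0\}$, $T=B_1\cap\{x_d=0\}$, $a\in(0,1)$ constant, $\omega(x)=|x_d|^a$; $F^\pm:S(d)\to\mathbb R$ satisfy $\lambda|N|\le F^\pm(M+N)-F^\pm(M)\le\Lambda|N|$ for all symmetric $M$ and $N\ge0$. Flat problem (F): $\omega F^\pm(D^2u)=f^\pm$ in $B_1^\pm$, $u^+_{x_d}-u^-_{x_d}=g$ on $T$. Viscosity subsolution of (F) (and analogously of the problem on $B_r$): $u\in USC$ such that for any $\varphi$ touching $u$ from above at $x_0$: if $x_0\in B^\pm$ and $\varphi$ is $C^2$ near $x_0$ then $\omega(x_0)F^\pm(D^2\varphi(x_0))\ge f^\pm(x_0)$; if $x_0$ lies on $\{x_d=0\}$ and $\varphi\in C^1(\overline{B^+_\delta(x_0)})\cap C^1(\overline{B^-_\delta(x_0)})$ then $\varphi^+_{x_d}(x_0)-\varphi^-_{x_d}(x_0)\ge g(x_0)$, with $\varphi^\pm=\varphi|_{B_\delta(x_0)\cap\{\pm x_d>0\}}$. Modulus of continuity: $\gamma_h(t)=\sup_{|x-y|\le t}|h(x)-h(y)|$. Upper $\varepsilon$-envelope in the $x'$-direction: for $y=(y',y_d)\in\overline{B_\rho}$, $u^\varepsilon(y)=\sup\{u(x',y_d)-\frac1\varepsilon|x'-y'|^2: (x',y_d)\in\overline{B_\rho}\}$. *)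

From HB Require Import structures.
From mathcomp Require Import all_boot all_order all_algebra.
From mathcomp Require Import all_classical all_reals all_analysis.
Set Implicit Arguments. Unset Strict Implicit. Unset Printing Implicit Defensive.
Import Order.TTheory GRing.Theory Num.Theory.
Import numFieldNormedType.Exports.
Local Open Scope classical_set_scope.
Local Open Scope ring_scope.

(* Points of R^d, d = n.+1, are row vectors 'rV[R]_(n.+1); the last
   coordinate (index ord_max) is x_d. *)
Section FlatDefs.
Variables (R : realType) (n : nat).
Local Notation V := 'rV[R]_(n.+1).

Definition enorm (x : V) : R := Num.sqrt (\sum_(i < n.+1) x 0 i ^+ 2).

Definition evec (i : 'I_n.+1) : V := delta_mx 0 i.

Definition xd (x : V) : R := x 0 ord_max.
Definition xprime (x : V) : V := x - xd x *: evec ord_max.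

Definition ballB (r : R) : set V := [set x | enorm x < r].
Definition ballEp (r : R) : set V := [set x | enorm x < r /\ 0 < xd x].
Definition ballEm (r : R) : set V := [set x | enorm x < r /\ xd x < 0].
Definition flatT (r : R) : set V := [set x | enorm x < r /\ xd x = 0].

Definition omega (a : R) (x : V) : R := `|xd x| `^ a.

Definition mnorm (N : 'M[R]_(n.+1)) : R :=
  sup [set enorm (v *m N) | v in [set v : V | enorm v <= 1]].

Definition symmat (M : 'M[R]_(n.+1)) : Prop := M^T = M.
Definition psd (N : 'M[R]_(n.+1)) : Prop :=
  forall v : V, 0 <= (v *m N *m v^T) 0 0.

(* uniform ellipticity of F : S(d) -> R (F is only constrained on
   symmat matrices) *)
Definition unif_elliptic (lam Lam : R) (F : 'M[R]_(n.+1) -> R) : Prop :=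
  forall M N : 'M[R]_(n.+1), symmat M -> symmat N -> psd N ->
    lam * mnorm N <= F (M + N) - F M <= Lam * mnorm N.

Definition hess (phi : V -> R) (x : V) : 'M[R]_(n.+1) :=
  \matrix_(i, j) derive (fun z => derive phi z (evec j)) x (evec i).

Definition C2_near (phi : V -> R) (x0 : V) : Prop :=
  exists2 del : R, 0 < del & forall y : V, enorm (y - x0) < del ->
    [/\ {for y, continuous phi},
        (forall i, derivable phi y (evec i)),
        (forall i, {for y, continuous (fun z => derive phi z (evec i))}),
        (forall i j, derivable (fun z => derive phi z (evec j)) y (evec i)) &
        (forall i j, {for y, continuous
            (fun z => derive (fun w => derive phi w (evec j)) z (evec i))})].

Definition halfball (s : bool) (x0 : V) (del : R) : set V :=
  [set x | enorm (x - x0) < del /\ (if s then 0 < xd x else xd x < 0)].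

(* phi in C^1(closure of halfball s x0 del); G i is the continuous
   extension to the closure of the partial derivative d_i phi^{+/-} *)
Definition C1_closure (s : bool) (phi : V -> R) (x0 : V) (del : R)
    (G : 'I_n.+1 -> V -> R) : Prop :=
  [/\ {within closure (halfball s x0 del), continuous phi},
      (forall i, {within closure (halfball s x0 del), continuous (G i)}) &
      (forall y, halfball s x0 del y -> forall i,
         derivable phi y (evec i) /\ derive phi y (evec i) = G i y)].

Definition touches_above (D : set V) (u phi : V -> R) (x0 : V) : Prop :=
  phi x0 = u x0 /\ exists2 del : R, 0 < del &
    forall x, D x -> enorm (x - x0) < del -> u x <= phi x.

Definition usc_on (D : set V) (u : V -> R) : Prop :=
  forall x, D x -> forall e : R, 0 < e -> exists2 del : R, 0 < del &
    forall y, D y -> enorm (y - x) < del -> u y < u x + e.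

(* The right-hand sides are extended-real valued (to allow f - gamma with an
   infinite modulus of continuity). *)
Definition subsolution (a r : R) (Fp Fm : 'M[R]_(n.+1) -> R)
    (fp fm g : V -> \bar R) (u : V -> R) : Prop :=
  [/\ usc_on (ballB r) u,
      (forall phi x0, ballEp r x0 -> touches_above (ballB r) u phi x0 ->
         C2_near phi x0 -> (fp x0 <= (omega a x0 * Fp (hess phi x0))%:E)%E),
      (forall phi x0, ballEm r x0 -> touches_above (ballB r) u phi x0 ->
         C2_near phi x0 -> (fm x0 <= (omega a x0 * Fm (hess phi x0))%:E)%E) &
      (forall phi x0 del Gp Gm, flatT r x0 -> touches_above (ballB r) u phi x0 ->
         0 < del -> C1_closure true phi x0 del Gp ->
         C1_closure false phi x0 del Gm ->
         (g x0 <= (Gp ord_max x0 - Gm ord_max x0)%:E)%E)].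

Definition modc (D : set V) (h : V -> R) (t : R) : \bar R :=
  ereal_sup [set z : \bar R | exists x y, [/\ D x, D y, enorm (x - y) <= t &
                                             z = (`|h x - h y|)%:E]].

Definition supnorm (u : V -> R) : R := sup [set `|u x| | x in ballB 1].

Definition uenv (rho eps : R) (u : V -> R) (y : V) : R :=
  sup [set u x - enorm (xprime x - xprime y) ^+ 2 / eps
      | x in [set x : V | enorm x <= rho /\ xd x = xd y]].

End FlatDefs.

From HB Require Import structures.
From mathcomp Require Import all_boot all_order all_algebra.
From mathcomp Require Import all_classical all_reals all_analysis.
From mathcomp Require Import ring lra.
Set Implicit Arguments. Unset Strict Implicit. Unset Printing Implicit Defensive.
Import Order.TTheory GRing.Theory Num.Theory.
Import numFieldNormedType.Exports.
Local Open Scope classical_set_scope.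
Local Open Scope ring_scope.

(* Since u is upper semicontinuous on the
   compact ball, the supremum is attained at some x_s with the same x_d as y,
   and |y - x_s| <= r_eps because the penalty never exceeds 2 ||u||_oo.  If phi
   touches u^eps from above at y, then phi(. + y - x_s) + |y - x_s|^2 / eps
   touches u from above at x_s.  This shift is horizontal, so it preserves the
   Hessian, the weight omega and the one-sided x_d-derivatives; the inequalities
   satisfied by u at x_s thus hold for phi at y, up to the oscillation of the data
   over the distance r_eps. *)

Section EuclideanNorm.
Variables (R : realType) (n : nat).
Local Notation V := 'rV[R]_(n.+1).
Implicit Types x y z : V.

Lemma enorm_ge0 x : 0 <= enorm x.
Proof. exact: sqrtr_ge0. Qed.

Lemma enorm_sqr x : enorm x ^+ 2 = \sum_(i < n.+1) x 0 i ^+ 2.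
Proof. by rewrite sqr_sqrtr // sumr_ge0 // => i _; exact: sqr_ge0. Qed.

Lemma enorm0 : enorm (0 : V) = 0.
Proof. by rewrite /enorm big1 ?sqrtr0 // => i _; rewrite mxE expr0n. Qed.

Lemma enormN x : enorm (- x) = enorm x.
Proof. by rewrite /enorm; congr Num.sqrt; apply: eq_bigr => i _; rewrite mxE sqrrN. Qed.

Lemma enorm_distC x y : enorm (x - y) = enorm (y - x).
Proof. by rewrite -enormN opprB. Qed.

Lemma coord_le_enorm x i : `|x 0 i| <= enorm x.
Proof.
rewrite -sqrtr_sqr; apply: ler_wsqrtr.
by rewrite (bigD1 i) //= lerDl sumr_ge0 // => j _; exact: sqr_ge0.
Qed.

Lemma Cauchy_Schwarz_sum x y :
  (\sum_(i < n.+1) x 0 i * y 0 i) ^+ 2 <=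
  (\sum_(i < n.+1) x 0 i ^+ 2) * (\sum_(i < n.+1) y 0 i ^+ 2).
Proof.
set A := \sum_(i < n.+1) x 0 i ^+ 2; set B := \sum_(i < n.+1) y 0 i ^+ 2.
set C := \sum_(i < n.+1) x 0 i * y 0 i.
have Lagrange : \sum_(i < n.+1) \sum_(j < n.+1) (x 0 i * y 0 j - x 0 j * y 0 i) ^+ 2
    = 2 * (A * B - C ^+ 2).
  have E i j : (x 0 i * y 0 j - x 0 j * y 0 i) ^+ 2 =
      x 0 i ^+ 2 * y 0 j ^+ 2 + x 0 j ^+ 2 * y 0 i ^+ 2
        - 2 * ((x 0 i * y 0 i) * (x 0 j * y 0 j)) by ring.
  under eq_bigr do under eq_bigr do rewrite E.
  under eq_bigr do rewrite sumrB big_split.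
  rewrite sumrB big_split /=.
  have -> : \sum_(i < n.+1) \sum_(j < n.+1) x 0 i ^+ 2 * y 0 j ^+ 2 = A * B.
    by rewrite mulr_suml; apply: eq_bigr => i _; rewrite mulr_sumr.
  have -> : \sum_(i < n.+1) \sum_(j < n.+1) x 0 j ^+ 2 * y 0 i ^+ 2 = A * B.
    rewrite mulrC mulr_suml; apply: eq_bigr => i _; rewrite mulr_sumr.
    by apply: eq_bigr => j _; rewrite mulrC.
  have -> : \sum_(i < n.+1) \sum_(j < n.+1) 2 * (x 0 i * y 0 i * (x 0 j * y 0 j))
      = 2 * C ^+ 2.
    rewrite expr2 mulr_suml mulr_sumr; apply: eq_bigr => i _.
    by rewrite !mulr_sumr; apply: eq_bigr => j _; ring.
  ring.
have : 0 <= 2 * (A * B - C ^+ 2).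
  by rewrite -Lagrange !sumr_ge0 // => i _; rewrite sumr_ge0 // => j _; exact: sqr_ge0.
by rewrite pmulr_rge0 // subr_ge0.
Qed.

Lemma ler_enormD x y : enorm (x + y) <= enorm x + enorm y.
Proof.
have S0 : 0 <= enorm x + enorm y by rewrite addr_ge0 ?enorm_ge0.
rewrite -[leRHS]ger0_norm // -sqrtr_sqr; apply: ler_wsqrtr.
have -> : \sum_(i < n.+1) (x + y) 0 i ^+ 2 = \sum_(i < n.+1) x 0 i ^+ 2
   + 2 * \sum_(i < n.+1) x 0 i * y 0 i + \sum_(i < n.+1) y 0 i ^+ 2.
  by rewrite mulr_sumr -!big_split /=; apply: eq_bigr => i _; rewrite mxE; ring.
rewrite -!enorm_sqr sqrrD lerD2r mulr2n.
suff : \sum_(i < n.+1) x 0 i * y 0 i <= enorm x * enorm y by lra.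
apply: le_trans (ler_norm _) _.
rewrite -[enorm x * enorm y]ger0_norm ?mulr_ge0 ?enorm_ge0 // -!sqrtr_sqr.
by apply: ler_wsqrtr; rewrite exprMn !enorm_sqr Cauchy_Schwarz_sum.
Qed.

Lemma ler_enorm_distD x y z : enorm (x - z) <= enorm (x - y) + enorm (y - z).
Proof. by apply: le_trans (ler_enormD _ _); rewrite addrA subrK. Qed.

Lemma enorm_sqr_distB_le x y x' y' :
  enorm (x - y) ^+ 2 - enorm (x' - y') ^+ 2 <=
  (enorm (x' - x) + enorm (y' - y)) *
  (2 * enorm (x - y) + enorm (x' - x) + enorm (y' - y)).
Proof.
have := ler_enorm_distD x x' y; have := ler_enorm_distD x' y' y.
have := ler_enorm_distD x' x y'; have := ler_enorm_distD x y y'.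
rewrite (enorm_distC x x') (enorm_distC y y').
have := enorm_ge0 (x - y); have := enorm_ge0 (x' - y').
have := enorm_ge0 (x' - x); have := enorm_ge0 (y' - y).
set a := enorm (x - y); set b := enorm (x' - y').
set s1 := enorm (x' - x); set s2 := enorm (y' - y) => *.
(* a^2 - b^2 = (a - b)(a + b) with |a - b| <= s1 + s2 *)
have : 0 <= (s1 + s2 - (a - b)) * (a + b) by (apply: mulr_ge0; lra).
have : 0 <= (s1 + s2) * (a + s1 + s2 - b) by (apply: mulr_ge0; lra).
nra.
Qed.

Lemma coord_le_mx_norm x i : `|x 0 i| <= `|x|.
Proof.
have /mapP[j _ ->] : `|x 0 i| \in [seq `|x k.1 k.2| | k : 'I_1 * 'I_n.+1].
  by apply/mapP; exists (ord0, i) => //=; rewrite mem_enum.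
by rewrite [leRHS]/Num.norm /= mx_normrE; apply/bigmax_geP; right; exists j.
Qed.

Lemma mx_norm_le_enorm x : `|x| <= enorm x.
Proof.
rewrite [leLHS]/Num.norm /= mx_normrE; apply/bigmax_leP; split => [|[i j] _ /=].
  exact: enorm_ge0.
by rewrite (ord1 i); exact: coord_le_enorm.
Qed.

Lemma enorm_le_mx_norm x : enorm x <= n.+1%:R * `|x|.
Proof.
rewrite -[leRHS]ger0_norm ?mulr_ge0 // -sqrtr_sqr; apply: ler_wsqrtr.
apply: le_trans (_ : \sum_(i < n.+1) `|x| ^+ 2 <= _).
  apply: ler_sum => i _; rewrite -real_normK ?num_real // lerXn2r ?nnegrE //.
  exact: coord_le_mx_norm.
rewrite sumr_const card_ord exprMn -mulr_natr.
have : (1 : R) <= n.+1%:R by rewrite ler1n.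
have := sqr_ge0 `|x|; set k := n.+1%:R; set a := `|x| ^+ 2; nra.
Qed.

Lemma nbhs_enorm (p : V) (d : R) : 0 < d -> nbhs p [set y | enorm (y - p) < d].
Proof.
move=> d0; apply/nbhs_ballP; exists (d / n.+1%:R) => /=; first by rewrite divr_gt0.
move=> y; rewrite -ball_normE /= => pyd; rewrite enorm_distC.
by apply: le_lt_trans (enorm_le_mx_norm _) _; rewrite mulrC -ltr_pdivlMr.
Qed.

Lemma nbhs_enormP (p : V) (N : set V) : nbhs p N ->
  exists2 d : R, 0 < d & forall y, enorm (y - p) < d -> N y.
Proof.
move=> /nbhs_ballP [e e0 He]; exists e => // y yp; apply: He.
by rewrite -ball_normE /= distrC; apply: le_lt_trans (mx_norm_le_enorm _) yp.
Qed.

Lemma xdD x y : xd (x + y) = xd x + xd y.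
Proof. by rewrite /xd mxE. Qed.

Lemma xdB x y : xd (x - y) = xd x - xd y.
Proof. by rewrite xdD /xd mxE. Qed.

Lemma xprimeB x y : xd x = xd y -> xprime x - xprime y = x - y.
Proof. by move=> xy; rewrite /xprime xy opprB addrA subrK. Qed.

Lemma cball_compact (rho : R) : compact [set x : V | enorm x <= rho].
Proof.
apply: bounded_closed_compact.
  exists rho; split; first exact: num_real.
  move=> M rhoM x /= xrho; apply: le_trans (mx_norm_le_enorm _) _.
  exact: le_trans xrho (ltW rhoM).
move=> p clp; rewrite /= leNgt; apply/negP => rhop.
have d0 : 0 < enorm p - rho by rewrite subr_gt0.
have [y [/= yrho yp]] := clp _ (nbhs_enorm p d0).
have := ler_enorm_distD p y 0; rewrite !subr0 enorm_distC; lra.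
Qed.

Lemma cball_nested_cluster (rho : R) (A : R -> set V) :
  (forall d, 0 < d -> A d !=set0) ->
  (forall d1 d2, 0 < d1 -> d1 <= d2 -> A d1 `<=` A d2) ->
  (forall d, 0 < d -> A d `<=` [set x | enorm x <= rho]) ->
  exists2 xb, enorm xb <= rho & forall d, 0 < d ->
     exists2 x, A d x & enorm (x - xb) < d.
Proof.
move=> An0 Amono Arho.
pose F := filter_from [set d : R | 0 < d] A.
have FF : Filter F.
  apply: filter_from_filter; first by exists 1 => /=.
  move=> i j /= i0 j0; exists (Order.min i j) => /=; first by rewrite lt_min i0.
  by move=> x Ax; split; apply: Amono x Ax; rewrite ?lt_min ?i0 ?ge_min ?lexx ?orbT.
have PF : ProperFilter F by apply: filter_from_proper => // i /An0.
have Frho : F [set x | enorm x <= rho] by exists 1; [exact: ltr01 | exact: Arho].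
have [xb [xbrho clxb]] := @cball_compact rho F PF Frho.
exists xb => // d d0.
have [x [Ax xxb]] := clxb (A d) _ (ex_intro2 _ _ d d0 (fun x h => h)) (nbhs_enorm xb d0).
by exists x.
Qed.
End EuclideanNorm.

Section Envelope.
Variables (R : realType) (n : nat).
Local Notation V := 'rV[R]_(n.+1).
Variables (u : V -> R) (rho eps : R).
Hypotheses (eps0 : 0 < eps) (rho1 : rho < 1) (usc : usc_on (ballB 1) u).

Lemma penalty_usc xb y e : ballB 1 xb -> enorm y <= 1 -> 0 < e ->
  exists2 eta : R, 0 < eta & forall x z : V, ballB 1 x ->
    enorm (x - xb) < eta -> enorm (z - y) < eta ->
    u x - enorm (x - z) ^+ 2 / eps < u xb - enorm (xb - y) ^+ 2 / eps + e.
Proof.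
move=> xbB y1 e0.
have [eta1 eta10 uxb] := usc xbB (divr_gt0 e0 (ltr0Sn _ 1)).
pose k := Order.min eta1 (Order.min 1 (eps * e / 24)).
have k0 : 0 < k by rewrite !lt_min eta10 ltr01 !divr_gt0 ?mulr_gt0.
have [keta k1 ke] : [/\ k <= eta1, k <= 1 & k <= eps * e / 24].
  by rewrite !ge_min !lexx !orbT.
exists k => // x z xB xxb zy.
have ux : u x < u xb + e / 2 by apply: uxb => //; exact: lt_le_trans xxb keta.
have := ler_enorm_distD xb 0 y; rewrite subr0 sub0r enormN.
have := enorm_sqr_distB_le xb y x z.
have := enorm_ge0 (x - xb); have := enorm_ge0 (z - y).
move: xbB xxb zy; rewrite /ballB /=.
set a := enorm (xb - y); set b := enorm (x - z).
set s1 := enorm (x - xb); set s2 := enorm (z - y) => xb1 s1k s2k s20 s10 hab a2.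
have hs : (s1 + s2) * (2 * a + s1 + s2) <= (s1 + s2) * 6.
  by apply: ler_wpM2l; lra.
have : (a ^+ 2 - b ^+ 2) / eps <= e / 2.
  by rewrite ler_pdivrMr //; lra.
rewrite mulrBl; lra.
Qed.

Lemma penalized_sup_attained (y : V) (c : R) : enorm y <= 1 ->
  (forall d, 0 < d -> exists x z : V, [/\ enorm x <= rho, enorm (z - y) < d,
     xd x = xd z & c - d < u x - enorm (x - z) ^+ 2 / eps]) ->
  exists xb, [/\ enorm xb <= rho, xd xb = xd y &
     c <= u xb - enorm (xb - y) ^+ 2 / eps].
Proof.
move=> y1 near_c.
pose A d := [set x : V | enorm x <= rho /\ exists z : V, [/\ enorm (z - y) < d,
  xd x = xd z & c - d < u x - enorm (x - z) ^+ 2 / eps]].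
have [|||xb xbrho clxb] := @cball_nested_cluster _ _ rho A.
- by move=> d /near_c [x [z [? ? ? ?]]]; exists x; split => //; exists z.
- move=> d1 d2 d10 d12 x [xrho [z [zy xz cz]]]; split => //.
  by exists z; split => //; [exact: lt_le_trans d12 | lra].
- by move=> d _ x [].
have xbB : ballB 1 xb := le_lt_trans xbrho rho1.
exists xb; split => //.
- apply/eqP; rewrite -subr_eq0 -normr_le0; apply/ler_addgt0Pr => e e0.
  have e20 : 0 < e / 2 by rewrite divr_gt0.
  have [x [_ [z [zy xz _]]] xxb] := clxb _ e20.
  have hx : `|xd (x - xb)| <= enorm (x - xb) := coord_le_enorm _ _.
  have hz : `|xd (z - y)| <= enorm (z - y) := coord_le_enorm _ _.
  apply: le_trans (ler_distD (xd z) _ _) _.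
  rewrite distrC -{1}xz -!xdB; lra.
- apply/ler_addgt0Pr => e e0.
  have e20 : 0 < e / 2 by rewrite divr_gt0.
  have [eta eta0 pen] := penalty_usc xbB y1 e20.
  have d0 : 0 < Order.min eta (e / 2) by rewrite lt_min eta0 e20.
  have [deta de] : Order.min eta (e / 2) <= eta /\ Order.min eta (e / 2) <= e / 2.
    by rewrite !ge_min !lexx orbT.
  have [x [xrho [z [zy xz cz]]] xxb] := clxb _ d0.
  have xB : ballB 1 x := le_lt_trans xrho rho1.
  have := pen x z xB (lt_le_trans xxb deta) (lt_le_trans zy deta); lra.
Qed.

Variable M : R.
Hypothesis uM : forall x, ballB 1 x -> u x <= M.

Local Notation penalized y := [set u x - enorm (xprime x - xprime y) ^+ 2 / eps
  | x in [set x : V | enorm x <= rho /\ xd x = xd y]].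

Lemma penalized_ubound y : has_ubound (penalized y).
Proof.
exists M => _ [x [xrho _] <-]; apply: le_trans (uM (le_lt_trans xrho rho1)).
by rewrite gerBl divr_ge0 ?sqr_ge0 // ltW.
Qed.

Lemma uenv_ge x y : enorm x <= rho -> xd x = xd y ->
  u x - enorm (x - y) ^+ 2 / eps <= uenv rho eps u y.
Proof.
move=> xrho xy; apply: (ub_le_sup (penalized_ubound y)).
by exists x => //; rewrite xprimeB.
Qed.

Lemma uenv_approx y e : enorm y <= rho -> 0 < e ->
  exists x, [/\ enorm x <= rho, xd x = xd y &
     uenv rho eps u y - e < u x - enorm (x - y) ^+ 2 / eps].
Proof.
move=> yrho e0.
have penalized_n0 : penalized y !=set0 by exists (u y - enorm (xprime y - xprime y) ^+ 2 / eps), y.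
have lt_sup : uenv rho eps u y - e < sup (penalized y) by rewrite gtrBl.
have [_ [x [xrho xy] <-] ltx] := sup_gt penalized_n0 lt_sup.
by exists x; split => //; rewrite -xprimeB.
Qed.

Lemma uenv_attained y : enorm y <= rho ->
  exists x, [/\ enorm x <= rho, xd x = xd y &
     uenv rho eps u y = u x - enorm (x - y) ^+ 2 / eps].
Proof.
move=> yrho.
have [||xb [xbrho xby ge_xb]] := @penalized_sup_attained y (uenv rho eps u y).
- exact: le_trans yrho (ltW rho1).
- move=> d d0; have [x [xrho xy ltx]] := uenv_approx yrho d0.
  by exists x, y; rewrite subrr enorm0.
by exists xb; split => //; apply/eqP; rewrite eq_le ge_xb uenv_ge.
Qed.

(* Were u^eps not usc at y, points z near y with u^eps z >= u^eps y + e would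
   produce a penalized value at y exceeding u^eps y. *)
Lemma uenv_usc r : r <= rho -> usc_on (ballB r) (uenv rho eps u).
Proof.
move=> rrho y yr e e0; apply/not_exists2P => no_delta.
have yrho : enorm y <= rho by exact: ltW (lt_le_trans yr rrho).
have [||xb [xbrho xby ge_xb]] :=
  @penalized_sup_attained y (uenv rho eps u y + e / 2).
- exact: le_trans yrho (ltW rho1).
- move=> d d0.
  case: (no_delta d) => [/(_ d0) //|/existsNP [z /not_implyP [zr /not_implyP [zy]]]].
  move=> /negP; rewrite -leNgt => ge_z.
  have zrho : enorm z <= rho by exact: ltW (lt_le_trans zr rrho).
  have [x [xrho xz ltx]] := uenv_approx zrho (divr_gt0 e0 (ltr0Sn _ 1)).
  exists x, z; split => //; apply: le_lt_trans ltx.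
  move: ge_z; move: (uenv rho eps u y) (uenv rho eps u z) => a b; lra.
have := uenv_ge xbrho xby; lra.
Qed.
End Envelope.

Section Translation.
Variables (R : realType) (n : nat).
Local Notation V := 'rV[R]_(n.+1).

Lemma derive_translate (f : V -> R) (h a v : V) (c : R) :
  derive (fun x : V => f (x + h) + c) a v = derive f (a + h) v.
Proof.
rewrite /derive; congr (lim (_ @ 0^')); apply/funext => t /=.
by rewrite addrA; congr (_ *: _); ring.
Qed.

Lemma derivable_translate (f : V -> R) (h a v : V) (c : R) :
  derivable (fun x : V => f (x + h) + c) a v = derivable f (a + h) v.
Proof.
rewrite /derivable; apply: (f_equal (fun g : R -> R => cvg (g @ 0^'))).
apply/funext => t /=.
by rewrite addrA; congr (_ *: _); ring.
Qed.

(* The [+ 0] puts partial derivatives back in the shape of the translation lemmas. *)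
Lemma partial_translate (f : V -> R) (h v : V) (c : R) :
  (fun z => derive (fun x : V => f (x + h) + c) z v) = (fun z => derive f (z + h) v + 0).
Proof. by apply/funext => z; rewrite derive_translate addr0. Qed.

Lemma continuous_translate (f : V -> R) (h y : V) (c : R) :
  {for (y + h), continuous f} -> {for y, continuous (fun x : V => f (x + h) + c)}.
Proof.
move=> fyh.
have shift : {for y, continuous (fun x : V => x + h)} by exact: cvgD cvg_id (cvg_cst h).
have shifted := @continuous_comp _ _ _ (fun x : V => x + h) f y shift fyh.
have addc : {for (f (y + h)), continuous (fun z : R => z + c)}.
  exact: cvgD cvg_id (cvg_cst c).
exact: continuous_comp shifted addc.
Qed.

Lemma within_continuousDr (A : set V) (f : V -> R) (c : R) :
  {within A, continuous f} -> {within A, continuous (fun x : V => f x + c)}.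
Proof.
move=> /subspace_continuousP fA; apply/subspace_continuousP => x Ax.
exact: cvgD (fA x Ax) (cvg_cst c).
Qed.

Lemma addrBDr (x y h : V) : x + h - (y + h) = x - y.
Proof. by rewrite (addrC y) addrKA. Qed.

Lemma C2_near_translate (phi : V -> R) (h x0 : V) (c : R) :
  C2_near phi (x0 + h) -> C2_near (fun x : V => phi (x + h) + c) x0.
Proof.
move=> [del del0 C2phi]; exists del => // y yx0.
have yhx0 : enorm (y + h - (x0 + h)) < del by rewrite addrBDr.
have [cphi dphi cdphi ddphi cddphi] := C2phi _ yhx0.
split.
- exact: continuous_translate.
- by move=> i; rewrite derivable_translate.
- move=> i; rewrite (partial_translate phi h (evec R i) c).
  exact: (continuous_translate (f := fun w => derive phi w (evec R i))).
- move=> i j; rewrite (partial_translate phi h (evec R j) c).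
  by rewrite (derivable_translate (fun w => derive phi w (evec R j))).
- move=> i j; rewrite (partial_translate phi h (evec R j) c).
  rewrite (partial_translate (fun w => derive phi w (evec R j)) h (evec R i) 0).
  exact: (continuous_translate
    (f := fun w => derive (fun w => derive phi w (evec R j)) w (evec R i))).
Qed.

Lemma hess_translate (phi : V -> R) (h x0 : V) (c : R) :
  hess (fun x : V => phi (x + h) + c) x0 = hess phi (x0 + h).
Proof.
apply/matrixP => i j; rewrite [LHS]mxE [RHS]mxE (partial_translate phi h (evec R j) c).
by rewrite (derive_translate (fun w => derive phi w (evec R j))).
Qed.

Lemma closure_translate (A B : set V) (h : V) :
  (forall x, B x -> A (x + h)) -> forall x, closure B x -> closure A (x + h).
Proof.
move=> BA x clBx N /nbhs_enormP [d d0 dN].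
have [y [By yx]] := clBx _ (nbhs_enorm x d0).
by exists (y + h); split; [exact: BA | apply: dN; rewrite addrBDr].
Qed.

Lemma within_continuous_translate (A B : set V) (f : V -> R) (h : V) :
  (forall x, B x -> A (x + h)) -> {within A, continuous f} ->
  {within B, continuous (fun x : V => f (x + h))}.
Proof.
move=> BA /subspace_continuousP fA; apply/subspace_continuousP => x Bx.
move=> P /(fA _ (BA _ Bx)) /nbhs_enormP [d d0 dP].
apply: filterS (nbhs_enorm x d0) => y yx By.
by apply: dP; [rewrite addrBDr | exact: BA].
Qed.

Lemma C1_closure_translate s (phi : V -> R) (x0 h : V) del
    (G : 'I_n.+1 -> V -> R) c : xd h = 0 ->
  C1_closure s phi (x0 + h) del G ->
  C1_closure s (fun x : V => phi (x + h) + c) x0 del (fun i x => G i (x + h)).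
Proof.
move=> h0 [cphi cG dG].
have shift x : halfball s x0 del x -> halfball s (x0 + h) del (x + h).
  by case=> xx0 xs; split; rewrite ?addrBDr // xdD h0 addr0.
have clshift := closure_translate shift.
split.
- exact: within_continuous_translate clshift (within_continuousDr (c := c) cphi).
- by move=> i; exact: within_continuous_translate clshift (cG i).
- move=> y /shift /dG dGy i; have [dy Gy] := dGy i.
  by rewrite derivable_translate derive_translate.
Qed.
End Translation.

Section EnvelopeSubsolution.
Variables (R : realType) (n : nat).
Local Notation V := 'rV[R]_(n.+1).

Lemma lee_sub_modc (D : set V) (f : V -> R) (t : R) x y :
  D x -> D y -> enorm (x - y) <= t -> ((f y)%:E - modc D f t <= (f x)%:E)%E.
Proof.
move=> Dx Dy xyt.
have : (`|f y - f x|%:E <= modc D f t)%E.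
  by apply: ereal_sup_ubound; exists y, x; rewrite enorm_distC.
case: (modc D f t) => [m | | ] //=; rewrite ?lee_fin ?leNye // => fm.
by have := ler_norm (f y - f x); lra.
Qed.

Variables (u : V -> R) (rho eps M : R).
Hypotheses (eps0 : 0 < eps) (rho1 : rho < 1)
  (uM : forall x, ballB 1 x -> `|u x| <= M) (usc : usc_on (ballB 1) u).
Local Notation reps := (Num.sqrt (2 * eps * supnorm u)).

Lemma le_supnorm x : ballB 1 x -> `|u x| <= supnorm u.
Proof.
move=> x1; apply: (ub_le_sup (_ : has_ubound _)); last by exists x.
by exists M => _ [z z1 <-]; exact: uM.
Qed.

Let u_le_M x : ballB 1 x -> u x <= M.
Proof. by move=> x1; exact: le_trans (ler_norm _) (uM x1). Qed.

Lemma uenv_maximizer_dist y xs : enorm y <= rho -> enorm xs <= rho ->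
  xd xs = xd y -> uenv rho eps u y = u xs - enorm (xs - y) ^+ 2 / eps ->
  enorm (y - xs) <= reps.
Proof.
move=> yrho xsrho xsy uenv_xs.
have := uenv_ge eps0 rho1 u_le_M yrho (erefl (xd y)).
rewrite subrr enorm0 expr0n /= mul0r subr0 uenv_xs enorm_distC.
have := le_supnorm (le_lt_trans xsrho rho1); have := le_supnorm (le_lt_trans yrho rho1).
have := ler_norm (u xs); have := ler_norm (- u y); rewrite normrN.
set q := enorm (y - xs) ^+ 2 / eps => *.
have : q <= 2 * supnorm u by lra.
rewrite /q ler_pdivrMr // => dist_sqr.
rewrite -[enorm _]ger0_norm ?enorm_ge0 // -sqrtr_sqr ler_wsqrtr //.
by rewrite mulrAC.
Qed.

Lemma le_rho r : r <= rho - reps -> r <= rho.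
Proof. by move=> rr; apply: le_trans rr _; rewrite gerBl sqrtr_ge0. Qed.

(* A test function touching the envelope at y0 is turned into one touching u
   at a maximizer xs, by the x'-translation y0 - xs and the constant penalty. *)
Lemma uenv_touch_transfer r (phi : V -> R) y0 : r <= rho - reps -> ballB r y0 ->
  touches_above (ballB r) (uenv rho eps u) phi y0 ->
  exists xs, [/\ enorm xs < rho, xd xs = xd y0, enorm (y0 - xs) <= reps &
    touches_above (ballB 1) u
      (fun x : V => phi (x + (y0 - xs)) + enorm (y0 - xs) ^+ 2 / eps) xs].
Proof.
rewrite /ballB /= => rr y0r [phiy0 [del del0 phi_ge]].
have y0rho : enorm y0 <= rho by exact: ltW (lt_le_trans y0r (le_rho rr)).
have [xs [xsrho xsy0 uenv_xs]] := uenv_attained eps0 rho1 usc u_le_M y0rho.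
have y0xs := uenv_maximizer_dist y0rho xsrho xsy0 uenv_xs.
have xs_lt : enorm xs < rho.
  by have := ler_enorm_distD xs y0 0; rewrite !subr0 enorm_distC; lra.
exists xs; split => //; split.
  have -> : xs + (y0 - xs) = y0 by rewrite addrC subrK.
  by rewrite phiy0 uenv_xs enorm_distC; ring.
exists (Order.min del (Order.min (rho - enorm xs) (r - enorm y0))).
  by rewrite !lt_min del0 !subr_gt0 xs_lt y0r.
move=> x _; rewrite !lt_min => /andP[xdel /andP[xrho xr]].
have shiftB : x + (y0 - xs) - y0 = x - xs by rewrite (addrC y0) addrA addrK.
have xh_r : ballB r (x + (y0 - xs)).
  have := ler_enorm_distD (x + (y0 - xs)) y0 0; rewrite !subr0 => /le_lt_trans.
  by apply; rewrite shiftB -ltrBrDr.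
have := phi_ge _ xh_r; rewrite shiftB => /(_ xdel).
have x_rho : enorm x <= rho.
  have := ler_enorm_distD x xs 0; rewrite !subr0 => /le_lt_trans.
  by move=> lt; apply/ltW/lt; rewrite -ltrBrDr.
have xd_shift : xd x = xd (x + (y0 - xs)) by rewrite xdD xdB xsy0 subrr addr0.
have := uenv_ge eps0 rho1 u_le_M x_rho xd_shift.
rewrite opprD addrA subrr add0r enormN => /le_trans le_phi /le_phi.
by rewrite lerBlDr.
Qed.

Lemma uenv_subsolution_interior (P : R -> Prop) (a : R)
    (F : 'M[R]_(n.+1) -> R) (f : V -> R) r : r <= rho - reps ->
  (forall phi x0, enorm x0 < 1 /\ P (xd x0) ->
     touches_above (ballB 1) u phi x0 -> C2_near phi x0 ->
     ((f x0)%:E <= (omega a x0 * F (hess phi x0))%:E)%E) ->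
  forall phi x0, enorm x0 < r /\ P (xd x0) ->
    touches_above (ballB r) (uenv rho eps u) phi x0 -> C2_near phi x0 ->
    ((f x0)%:E - modc [set x | (enorm x < 1)%R /\ P (xd x)] f reps <=
     (omega a x0 * F (hess phi x0))%:E)%E.
Proof.
move=> rr sub phi x0 [x0r Px0] touch C2phi.
have [xs [xsrho xsx0 x0xs touch_xs]] := uenv_touch_transfer rr x0r touch.
have x01 : enorm x0 < 1 by apply: lt_le_trans x0r (le_trans (le_rho rr) (ltW rho1)).
have xs1 : enorm xs < 1 := lt_trans xsrho rho1.
have C2xs : C2_near (fun x : V => phi (x + (x0 - xs)) + enorm (x0 - xs) ^+ 2 / eps) xs.
  by apply: C2_near_translate; rewrite addrC subrK.
have Pxs : P (xd xs) by rewrite xsx0.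
have := sub _ xs (conj xs1 Pxs) touch_xs C2xs.
rewrite hess_translate addrC subrK /omega xsx0; apply: le_trans.
by apply: lee_sub_modc (conj xs1 Pxs) (conj x01 Px0) _; rewrite enorm_distC.
Qed.

Lemma uenv_subsolution_flat (g : V -> R) r : r <= rho - reps ->
  (forall phi x0 del Gp Gm, flatT 1 x0 -> touches_above (ballB 1) u phi x0 ->
     0 < del -> C1_closure true phi x0 del Gp -> C1_closure false phi x0 del Gm ->
     ((g x0)%:E <= (Gp ord_max x0 - Gm ord_max x0)%:E)%E) ->
  forall phi x0 del Gp Gm, flatT r x0 ->
    touches_above (ballB r) (uenv rho eps u) phi x0 ->
    0 < del -> C1_closure true phi x0 del Gp -> C1_closure false phi x0 del Gm ->
    ((g x0)%:E - modc (flatT 1) g reps <= (Gp ord_max x0 - Gm ord_max x0)%:E)%E.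
Proof.
move=> rr sub phi x0 del Gp Gm [x0r x0d] touch del0 C1p C1m.
have [xs [xsrho xsx0 x0xs touch_xs]] := uenv_touch_transfer rr x0r touch.
have x01 : enorm x0 < 1 by apply: lt_le_trans x0r (le_trans (le_rho rr) (ltW rho1)).
have h0 : xd (x0 - xs) = 0 by rewrite xdB xsx0 subrr.
have x0E : xs + (x0 - xs) = x0 by rewrite addrC subrK.
have shifted s G : C1_closure s phi x0 del G ->
    C1_closure s (fun x : V => phi (x + (x0 - xs)) + enorm (x0 - xs) ^+ 2 / eps)
      xs del (fun i x => G i (x + (x0 - xs))).
  by rewrite -{1}x0E; exact: C1_closure_translate.
have xsT : flatT 1 xs by split; [exact: lt_trans xsrho rho1 | rewrite xsx0].
have := sub _ xs del _ _ xsT touch_xs del0 (shifted _ _ C1p) (shifted _ _ C1m).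
rewrite /= x0E; apply: le_trans.
by apply: lee_sub_modc xsT (conj x01 x0d) _; rewrite enorm_distC.
Qed.
End EnvelopeSubsolution.

Theorem mainTheorem9 (R : realType) (n : nat) (a lam Lam rho : R)
  (Fp Fm : 'M[R]_(n.+1) -> R) (fp fm g u : 'rV[R]_(n.+1) -> R) :
  0 < a < 1 -> 0 < lam <= Lam ->
  unif_elliptic lam Lam Fp -> unif_elliptic lam Lam Fm ->
  {within @ballEp R n 1, continuous fp} -> {within @ballEm R n 1, continuous fm} ->
  {within @flatT R n 1, continuous g} ->
  0 < rho < 1 ->
  (exists M : R, forall x, @ballB R n 1 x -> `|u x| <= M) ->
  subsolution a 1 Fp Fm (fun x => (fp x)%:E) (fun x => (fm x)%:E)
    (fun x => (g x)%:E) u ->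
  exists2 eps0 : R, 0 < eps0 & forall eps : R, 0 < eps < eps0 ->
    let reps := Num.sqrt (2 * eps * supnorm u) in
    forall r : R, 0 < r -> r <= rho - reps ->
      subsolution a r Fp Fm
        (fun x => ((fp x)%:E - modc (@ballEp R n 1) fp reps)%E)
        (fun x => ((fm x)%:E - modc (@ballEm R n 1) fm reps)%E)
        (fun x => ((g x)%:E - modc (@flatT R n 1) g reps)%E)
        (uenv rho eps u).
Proof.
move=> _ _ _ _ _ _ _ /andP[_ rho1] [M uM] [usc sub_p sub_m sub_T].
exists 1 => // eps /andP[eps0 _] reps r _ rr.
have u_le_M x : ballB 1 x -> u x <= M by move=> /uM; exact: le_trans (ler_norm _).
split.
- by have := uenv_usc eps0 rho1 usc u_le_M (le_rho rr).
- exact: (uenv_subsolution_interior (P := >%R^~ 0) eps0 rho1 uM usc rr sub_p).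
- exact: (uenv_subsolution_interior (P := <%R^~ 0) eps0 rho1 uM usc rr sub_m).
- by have := uenv_subsolution_flat eps0 rho1 uM usc rr sub_T.
Qed.
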